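(* Let $m/n\in(0,1/2)$ with $m>1$, let $u/v=\mathrm{LFP}(m/n)$, and let $k\in[0,m-2]\setminus R_{m/n}$. Then $k\in\mathcal A_{m/n}$ if and only if $\psi_{m/n}(k)\in\mathcal A_{u/v}$.
   Context: Rationals in lowest terms; $\mathrm{LFP}(h/k)$ is the element immediately preceding $h/k$ in the increasing list of rationals in $[0,1/2]$ with denominator at most $k$. $+_n$ is addition mod $n$ on $\mathbb Z_n=\{0,\dots,n-1\}$; $\mathcal O_{m/n}[r,s]=\{r+_njm\colon 0\le j\le K\}$ with $K\ge0$ least such that $r+_nKm=s$; $[a,b]=\{a,\dots,b\}$. An integer $k\in[0,m-1]$ is $m/n$-admissible if $[k+1,m-1]\cap\mathcal O_{m/n}[k,0]=\emptyset$; $\mathcal A_{m/n}$ is the set of $m/n$-admissible integers (and similarly $\mathcal A_{u/v}\subseteq[0,u-1]$). $R_{m/n}=\mathcal O_{m/n}[m,n-1]$, and $\psi_{m/n}\colon\mathbb Z_n\to\mathbb Z_v$ is $\psi_{m/n}(k)=k-\#(R_{m/n}\cap[0,k])$. *)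

From mathcomp Require Import all_boot.
Set Implicit Arguments. Unset Strict Implicit. Unset Printing Implicit Defensive.

Definition addmod (n r x : nat) : nat := (r + x) %% n.

Definition orbpt (m n r j : nat) : nat := addmod n r (j * m).

(* K = least K >= 0 with r +_n K m = s (searched in [0, n-1]; when
   gcd(m,n) = 1 and r, s are in Z_n such a K exists and is < n) *)
Definition orbK (m n r s : nat) : nat :=
  find (fun j => orbpt m n r j == s) (iota 0 n).

Definition orbit (m n r s : nat) : seq nat :=
  [seq orbpt m n r j | j <- iota 0 (orbK m n r s).+1].

Definition admissible (m n k : nat) : bool :=
  (k < m) && all (fun x => ~~ (k < x < m)) (orbit m n k 0).

Definition Rset (m n : nat) : seq nat := orbit m n m n.-1.

Definition psi (m n k : nat) : nat :=
  k - size [seq x <- undup (Rset m n) | x <= k].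

(* u/v = LFP(h/k): u/v is a rational in lowest terms in [0,1/2] with
   denominator at most k, u/v < h/k, and no rational p/q in [0,1/2] with
   q <= k lies strictly between u/v and h/k.  (Fractions compared by
   cross-multiplication.) *)
Definition is_LFP (h k u v : nat) : Prop :=
  [/\ 0 < v /\ v <= k, coprime u v, 2 * u <= v, u * k < h * v &
      forall p q : nat, 0 < q -> q <= k -> 2 * p <= q ->
        ~ (u * q < p * v /\ p * k < h * q)].

From mathcomp Require Import all_boot zify.
Set Implicit Arguments. Unset Strict Implicit. Unset Printing Implicit Defensive.

(* Since u/v is the left Farey neighbour of m/n, m v = n u + 1.  The map
   b |-> floor(n b / v) is then an increasing bijection from Z_v onto the
   complement of R_{m/n} in Z_n, inverse to psi, sending u to m - 1; on
   nonzero points it turns the step +u mod v into the step +m mod n.  So the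
   m/n-orbit from floor(n a / v) to 0 is the image of the u/v-orbit from a to
   0, and the windows (k, m) and (a, u) defining admissibility correspond. *)

Lemma det_dvdn1 a b c d g : a * b = c * d + 1 -> g %| a * b -> g %| c * d -> g %| 1.
Proof. by move=> det g_ab g_cd; rewrite -(dvdn_addr _ g_cd) -det. Qed.

Lemma coprime_left_neighbour m n : coprime m n -> 0 < m -> 0 < n ->
  exists p q, [/\ 0 < q, q <= n & m * q = n * p + 1].
Proof.
move=> cmn m_gt0 n_gt0; have [a a_lt_n] := Bezoutl m n_gt0.
rewrite gcdnC (eqP cmn) => /dvdnP [c def_c].
have c_le_m : c <= m by rewrite -(leq_pmul2r n_gt0); nia.
exists (m - c), (n - a); split; [lia | lia | rewrite !mulnBr; nia].
Qed.

Lemma reduced_fraction_eq u v p q : coprime u v -> coprime p q ->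
  0 < v -> u * q = p * v -> u = p /\ v = q.
Proof.
move=> cuv cpq v_gt0 cross.
have v_dvd_q : v %| q.
  by rewrite -(@Gauss_dvdr v u) 1?coprime_sym // cross dvdn_mull.
have q_dvd_v : q %| v.
  by rewrite -(@Gauss_dvdr q p) 1?coprime_sym // -cross dvdn_mull.
have v_eq_q : v = q by apply/eqP; rewrite eqn_dvd v_dvd_q q_dvd_v.
by split => //; apply/eqP; move: cross; rewrite -v_eq_q => /eqP; rewrite eqn_pmul2r.
Qed.

Lemma LFP_det m n u v : coprime m n -> 2 * m < n -> is_LFP m n u v ->
  m * v = n * u + 1.
Proof.
move=> cmn mn [[v_gt0 v_le_n] cuv _ uv_lt_mn no_between].
have m_gt0 : 0 < m by nia.
have [p [q [q_gt0 q_le_n det]]] := coprime_left_neighbour cmn m_gt0 (leq_ltn_trans (leq0n _) mn).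
have pv_le_uq : p * v <= u * q.
  by rewrite leqNgt; apply/negP => lt; apply: (no_between p q) => //; nia.
have uq_le_pv : u * q <= p * v by nia.
have cpq : coprime p q.
  rewrite /coprime -dvdn1 (det_dvdn1 det) //.
  - exact: dvdn_mull (dvdn_gcdr _ _).
  - exact: dvdn_mull (dvdn_gcdl _ _).
have uq_eq_pv : u * q = p * v by apply/eqP; rewrite eqn_leq uq_le_pv pv_le_uq.
by have [-> ->] := reduced_fraction_eq cuv cpq v_gt0 uq_eq_pv.
Qed.

Lemma orbpt0 m n r : orbpt m n r 0 = r %% n.
Proof. by rewrite /orbpt /addmod mul0n addn0. Qed.

Lemma orbptS m n r j : orbpt m n r j.+1 = (orbpt m n r j + m) %% n.
Proof. by rewrite /orbpt /addmod mulSnr addnA modnDml. Qed.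

Lemma orbpt_stepE m n j : orbpt m n m j = j.+1 * m %% n.
Proof. by rewrite /orbpt /addmod mulSn. Qed.

Lemma orbK_eq m n r s K : K < n -> orbpt m n r K = s ->
  (forall j, j < K -> orbpt m n r j != s) -> orbK m n r s = K.
Proof.
move=> K_lt_n hit before.
have has_hit : has (fun j => orbpt m n r j == s) (iota 0 n).
  by apply/hasP; exists K; rewrite ?mem_iota ?hit.
have := has_hit; rewrite has_find size_iota => find_lt_n.
case: (ltngtP (orbK m n r s) K) => // [lt|gt].
  by have := nth_find 0 has_hit; rewrite nth_iota // add0n (negbTE (before _ lt)).
by have := before_find 0 gt; rewrite nth_iota // add0n hit eqxx.
Qed.

Lemma orbKP m n r s j : j < n -> orbpt m n r j = s ->
  [/\ orbK m n r s < n, orbpt m n r (orbK m n r s) = s &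
      forall i, i < orbK m n r s -> orbpt m n r i != s].
Proof.
move=> j_lt_n hit.
have has_hit : has (fun j => orbpt m n r j == s) (iota 0 n).
  by apply/hasP; exists j; rewrite ?mem_iota ?hit.
have K_lt_n : orbK m n r s < n by have := has_hit; rewrite has_find size_iota.
split => //; first by have := nth_find 0 has_hit; rewrite nth_iota // add0n => /eqP.
by move=> i lt; have := before_find 0 lt; rewrite nth_iota ?add0n ?(ltn_trans lt) // => ->.
Qed.

Lemma mem_orbit_lt m n r s x : 0 < n -> x \in orbit m n r s -> x < n.
Proof. by move=> n_gt0 /mapP [j _ ->]; apply: ltn_pmod. Qed.

Lemma size_filter_undup_leq (s : seq nat) k :
  size [seq x <- undup s | x <= k] = count (mem s) (iota 0 k.+1).
Proof.
rewrite -size_filter; apply/perm_size/uniq_perm; rewrite ?filter_uniq ?undup_uniq ?iota_uniq //.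
by move=> x; rewrite !mem_filter mem_undup mem_iota ltnS andbC.
Qed.

Section FareyEmbedding.

Variables m n u v : nat.
Hypothesis v_gt0 : 0 < v.
Hypothesis v_lt_n : v < n.
Hypothesis det : m * v = n * u + 1.

Definition embed b := n * b %/ v.

Let n_gt0 : 0 < n. Proof. exact: ltn_trans v_lt_n. Qed.

Lemma embed0 : embed 0 = 0.
Proof. by rewrite /embed muln0 div0n. Qed.

Lemma embed_lt b : b < v -> embed b < n.
Proof. by move=> b_lt_v; rewrite /embed ltn_divLR // ltn_mul2l n_gt0. Qed.

Lemma embed_homo : {homo embed : a b / a < b}.
Proof.
apply: (homo_ltn ltn_trans) => a; rewrite /embed mulnS.
have : (1 * v + n * a) %/ v <= (n + n * a) %/ v by rewrite leq_div2r // mul1n leq_add2r ltnW.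
by rewrite divnMDl.
Qed.

Lemma embed_leE : {mono embed : a b / a <= b}.
Proof. exact: leq_mono embed_homo. Qed.

Lemma embed_ltE : {mono embed : a b / a < b}.
Proof. by move=> a b; rewrite !ltnNge embed_leE. Qed.

Lemma embedDv x c : embed (x + c * v) = embed x + c * n.
Proof. by rewrite /embed mulnDr mulnCA mulnA addnC divnMDl // addnC. Qed.

Lemma coprime_v_n : coprime v n.
Proof.
rewrite /coprime -dvdn1 (det_dvdn1 det) //.
- exact: dvdn_mull (dvdn_gcdl _ _).
- exact: dvdn_mulr (dvdn_gcdr _ _).
Qed.

Lemma scaled_mod_gt0 b : 0 < b < v -> 0 < n * b %% v.
Proof.
case/andP=> b_gt0 b_lt_v.
by rewrite lt0n -[_ == 0]/(v %| n * b) (Gauss_dvdr _ coprime_v_n) gtnNdvd.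
Qed.

Lemma embed_u : embed u = m.-1.
Proof.
rewrite /embed (_ : n * u = m.-1 * v + v.-1); last by case: m det => [|m'] /=; lia.
by rewrite divnMDl // divn_small ?addn0 //; lia.
Qed.

Lemma embedDu b : 0 < b < v -> embed (b + u) = embed b + m.
Proof.
move=> b_range; have r_gt0 := scaled_mod_gt0 b_range; have r_lt := ltn_pmod (n * b) v_gt0.
rewrite /embed mulnDr {1}(divn_eq (n * b) v).
move: (n * b %/ v) (n * b %% v) r_gt0 r_lt => q r r_gt0 r_lt.
rewrite (_ : q * v + r + n * u = (q + m) * v + r.-1); last by rewrite mulnDl; lia.
by rewrite divnMDl // divn_small ?addn0 //; lia.
Qed.

Lemma embed_step b : 0 < b < v -> (embed b + m) %% n = embed ((b + u) %% v).
Proof.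
move=> b_range; rewrite -embedDu // {1}(divn_eq (b + u) v) addnC embedDv addnC.
by rewrite modnMDl modn_small // embed_lt // ltn_pmod.
Qed.

Lemma embed_inj : injective embed.
Proof. exact: incn_inj embed_leE. Qed.

(* [v] is the inverse of [m] modulo [n]. *)
Lemma mulm_modn_eq x t : x < n -> t < n -> (t * m %% n == x) = (x * v %% n == t).
Proof.
move=> x_lt_n t_lt_n.
have inv y : y * m * v = y * u * n + y by rewrite -mulnA det mulnDr muln1 mulnCA mulnC.
apply/eqP/eqP => <-; rewrite modnMml.
- by rewrite inv modnMDl modn_small.
- by rewrite -mulnA [v * m]mulnC mulnA inv modnMDl modn_small.
Qed.

Lemma predn_mulv_mod : n.-1 * v %% n = n - v.
Proof.
rewrite (_ : n.-1 * v = v.-1 * n + (n - v)) ?modnMDl ?modn_small; try lia.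
by case: n v_lt_n => // n'; case: v v_gt0 => // v' _ v_lt /=; rewrite !mulnS; lia.
Qed.

Lemma step_eq_last t : 0 < t < n -> (t * m %% n == n.-1) = (t == n - v).
Proof. by move=> t_range; rewrite mulm_modn_eq ?predn_mulv_mod 1?eq_sym //; lia. Qed.

(* [(n - v) * m = -1 mod n], so the orbit defining [R_{m/n}] stops after [n - v] steps. *)
Lemma Rset_E : Rset m n = [seq t * m %% n | t <- iota 1 (n - v)].
Proof.
have K_eq : orbK m n m n.-1 = (n - v).-1.
  apply: orbK_eq => [|| j j_lt]; rewrite ?orbpt_stepE; try lia.
    by apply/eqP; rewrite step_eq_last; lia.
  by rewrite step_eq_last; lia.
rewrite /Rset /orbit K_eq prednK ?subn_gt0 // (iotaDl 1 0) -map_comp.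
by apply: eq_map => j; rewrite /= orbpt_stepE.
Qed.

Lemma mem_Rset x : x < n -> (x \in Rset m n) = (0 < x * v %% n <= n - v).
Proof.
move=> x_lt_n; rewrite Rset_E; apply/mapP/idP.
- case=> t; rewrite mem_iota => t_range ->.
  have /eqP -> : (t * m %% n) * v %% n == t by rewrite -mulm_modn_eq ?ltn_pmod //; lia.
  lia.
- move=> t_range; exists (x * v %% n); first by rewrite mem_iota; lia.
  by apply/esym/eqP; rewrite mulm_modn_eq ?ltn_pmod.
Qed.

Lemma embed_notin_Rset b : b < v -> embed b \notin Rset m n.
Proof.
case: b => [|b] b_lt_v; first by rewrite embed0 mem_Rset // mod0n.
rewrite mem_Rset ?embed_lt //.
have r_gt0 := @scaled_mod_gt0 b.+1 b_lt_v.
have r_lt := ltn_pmod (n * b.+1) v_gt0.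
have := divn_eq (n * b.+1) v; rewrite /embed.
move: (n * b.+1 %/ v) (n * b.+1 %% v) r_gt0 r_lt => q r r_gt0 r_lt def_nb.
rewrite (_ : q * v = b * n + (n - r)) ?modnMDl ?modn_small; lia.
Qed.

Lemma notin_Rset_embed x : x < n -> x \notin Rset m n -> exists2 b, b < v & x = embed b.
Proof.
move=> x_lt_n; rewrite mem_Rset // negb_and -leqNgt -ltnNge => /orP[t_eq0 | t_gt].
  exists 0 => //; rewrite embed0.
  have : n %| x * v by rewrite /dvdn -leqn0.
  by rewrite Gauss_dvdl 1?coprime_sym ?coprime_v_n // /dvdn modn_small // => /eqP.
have := divn_eq (x * v) n; have := ltn_pmod (x * v) n_gt0.
move: (x * v %/ n) (x * v %% n) t_gt => c t t_gt t_lt def_xv.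
exists c.+1; first by rewrite -(ltn_pmul2l n_gt0); nia.
by rewrite /embed (_ : n * c.+1 = x * v + (n - t)) ?divnMDl ?divn_small ?addn0 //; lia.
Qed.

Lemma psi_embed a : a < v -> psi m n (embed a) = a.
Proof.
move=> a_lt_v; have k_lt_n := embed_lt a_lt_v.
have count_notR : count (predC (mem (Rset m n))) (iota 0 (embed a).+1) = a.+1.
  rewrite -size_filter -(size_iota 0 a.+1) -(size_map embed).
  apply/perm_size/uniq_perm; rewrite ?(map_inj_uniq embed_inj) ?filter_uniq ?iota_uniq //.
  move=> x; rewrite mem_filter mem_iota leq0n add0n ltnS andTb; apply/andP/mapP => [[xR x_le] | [b]].
    have [b b_lt_v def_x] := notin_Rset_embed (leq_ltn_trans x_le k_lt_n) xR.
    by exists b; rewrite // mem_iota leq0n add0n ltnS andTb -embed_leE -def_x.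
  rewrite mem_iota leq0n add0n ltnS andTb => b_le ->; rewrite embed_leE.
  by split; [apply: embed_notin_Rset; exact: leq_ltn_trans a_lt_v | ].
have := count_predC (mem (Rset m n)) (iota 0 (embed a).+1).
by rewrite /psi size_filter_undup_leq size_iota count_notR; lia.
Qed.

Section OrbitOfA.

Variable a : nat.
Hypothesis a_lt_v : a < v.

Local Notation K := (orbK u v a 0).

Lemma orbK0P :
  [/\ K < v, orbpt u v a K = 0 & forall i, i < K -> orbpt u v a i != 0].
Proof.
apply: (orbKP (j := a * n %% v)); first exact: ltn_pmod.
rewrite /orbpt /addmod -modnDmr modnMml modnDmr -mulnA -[a in a + _]muln1 -mulnDr.
by rewrite addnC -det mulnA modnMl.
Qed.

Lemma orbpt_embed j : j <= K -> orbpt m n (embed a) j = embed (orbpt u v a j).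
Proof.
have [_ _ nonzero] := orbK0P; elim: j => [|j IH] j_le.
  by rewrite !orbpt0 !modn_small ?embed_lt.
by rewrite !orbptS IH ?(ltnW j_le) // embed_step // lt0n nonzero // ltn_pmod.
Qed.

Lemma orbit_embed : orbit m n (embed a) 0 = map embed (orbit u v a 0).
Proof.
have [K_lt hit nonzero] := orbK0P.
have K_eq : orbK m n (embed a) 0 = K.
  apply: orbK_eq => [|| j j_lt]; first exact: ltn_trans v_lt_n.
  - by rewrite orbpt_embed // hit embed0.
  - by rewrite (orbpt_embed (ltnW j_lt)) -embed0 (inj_eq embed_inj) nonzero.
rewrite /orbit K_eq -map_comp; apply/eq_in_map => j; rewrite mem_iota ltnS => /andP [_ j_le].
exact: orbpt_embed.
Qed.

Hypothesis u_lt_v : u < v.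

Lemma u_notin_orbit : a != u -> u \notin orbit u v a 0.
Proof.
move=> a_neq_u; apply/mapP => -[j]; rewrite mem_iota ltnS => /andP [_ j_le].
have [_ _ nonzero] := orbK0P.
case: j j_le => [|j] j_le; first by rewrite orbpt0 modn_small // => u_eq; rewrite u_eq eqxx in a_neq_u.
have := nonzero j j_le; have : orbpt u v a j < v := ltn_pmod _ v_gt0.
rewrite orbptS; move: (orbpt u v a j) => b b_lt_v b_neq0.
case: (ltnP (b + u) v) => [small | big]; first by rewrite modn_small //; lia.
by rewrite -(subnK big) modnDr modn_small; lia.
Qed.

End OrbitOfA.

End FareyEmbedding.

Theorem lemma2p19 (m n u v k : nat) :
  coprime m n -> 0 < m -> 2 * m < n -> 1 < m ->
  is_LFP m n u v ->
  k <= m - 2 -> k \notin Rset m n ->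
  admissible m n k = admissible u v (psi m n k).
Proof.
move=> cmn m_gt0 mn m_gt1 lfp k_le kR.
have det := LFP_det cmn mn lfp.
have [[v_gt0 v_le_n] _ u_le _ _] := lfp.
have v_lt_n : v < n.
  rewrite ltn_neqAle v_le_n andbT; apply/eqP => v_eq; move: det.
  by rewrite v_eq => /(congr1 (modn^~ n)); rewrite modnMl (mulnC n) modnMDl modn_small //; lia.
have k_lt_n : k < n by lia.
have [a a_lt_v def_k] := notin_Rset_embed v_gt0 v_lt_n det k_lt_n kR; subst k.
have u_image := embed_u v_gt0 v_lt_n det.
have a_lt_u : a < u by rewrite -(embed_ltE v_gt0 v_lt_n) u_image; lia.
have ka : embed n v a < m by lia.
rewrite (psi_embed v_gt0 v_lt_n det a_lt_v) /admissible (orbit_embed v_gt0 v_lt_n det a_lt_v).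
rewrite all_map ka a_lt_u !andTb.
apply: eq_in_all => y y_in /=.
have y_lt_v := mem_orbit_lt v_gt0 y_in.
have y_neq_u : y != u.
  by apply: contraTneq y_in => ->; apply: (u_notin_orbit v_gt0 v_lt_n det a_lt_v); rewrite ?ltn_eqF //; lia.
rewrite embed_ltE // -[m]prednK // ltnS -u_image embed_leE //.
by rewrite [y <= u]leq_eqVlt (negbTE y_neq_u).
Qed.
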